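(* Let $R$ be an associative ring with identity and let $e_1, e_2$ be idempotents of $R$ with $e_1 \sim_i e_2$. Then there is an automorphism of $R$ sending $e_1$ to $e_2$.
   Context: Let $\gamma(R)$ be the directed graph whose vertices are the idempotents of $R$, with an edge $f \to g$ if and only if $fg = 0$; $f$ is then called an in-neighbour of $g$. For idempotents $e, e'$, write $e \sim_i e'$ if they have the same set of in-neighbours in $\gamma(R)$, i.e. for every idempotent $f \in R$, $fe = 0 \iff fe' = 0$. *)

From HB Require Import structures.
From mathcomp Require Import all_boot all_order all_algebra.
Set Implicit Arguments. Unset Strict Implicit. Unset Printing Implicit Defensive.
Import GRing.Theory.
Local Open Scope ring_scope.

Definition idem (R : pzRingType) (e : R) : Prop := e * e = e.

(* e ~_i e' : e and e' have the same in-neighbours in the directed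
   idempotent graph gamma(R), where f -> g iff f * g = 0. *)
Definition same_in_nbrs (R : pzRingType) (e e' : R) : Prop :=
  forall f : R, idem f -> (f * e = 0 <-> f * e' = 0).

(* If e1 ~_i e2, testing against the idempotents 1 - e1 and 1 - e2 gives
   e1 e2 = e2 and e2 e1 = e1. Then a := e2 - e1 squares to zero, so 1 + a is
   a unit with inverse 1 - a, and conjugation x |-> (1 - a) x (1 + a) is an
   inner automorphism sending e1 to e1 + e1 a = e2. *)
From HB Require Import structures.
From mathcomp Require Import all_boot all_order all_algebra.
Set Implicit Arguments. Unset Strict Implicit. Unset Printing Implicit Defensive.
Import GRing.Theory.
Local Open Scope ring_scope.

(* The unused proofs [uv] and [vu] are carried so that [conjr uv vu] can be
   declared a ring morphism. *)
Definition conjr (R : pzRingType) (u v : R) (uv : u * v = 1) (vu : v * u = 1)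
    (x : R) : R :=
  v * x * u.

Section Conjugation.
Variables (R : pzRingType) (u v : R) (uv : u * v = 1) (vu : v * u = 1).

Lemma conjr_is_nmod_morphism : nmod_morphism (conjr uv vu).
Proof. by split=> [|x y]; rewrite /conjr ?mulr0 ?mul0r // mulrDr mulrDl. Qed.

Lemma conjr_is_monoid_morphism : monoid_morphism (conjr uv vu).
Proof.
split=> [|x y]; rewrite /conjr; first by rewrite mulr1.
by rewrite -!mulrA (mulrA u) uv mul1r.
Qed.

HB.instance Definition _ :=
  GRing.isNmodMorphism.Build R R (conjr uv vu) conjr_is_nmod_morphism.
HB.instance Definition _ :=
  GRing.isMonoidMorphism.Build R R (conjr uv vu) conjr_is_monoid_morphism.

End Conjugation.

Lemma conjrK (R : pzRingType) (u v : R) (uv : u * v = 1) (vu : v * u = 1) :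
  cancel (conjr uv vu) (conjr vu uv).
Proof. by move=> x; rewrite /conjr !mulrA uv mul1r -mulrA uv mulr1. Qed.

Lemma conjr_bij (R : pzRingType) (u v : R) (uv : u * v = 1) (vu : v * u = 1) :
  bijective (conjr uv vu).
Proof. by exists (conjr vu uv); apply: conjrK. Qed.

Section SquareZero.
Variables (R : pzRingType) (a : R).
Hypothesis a2 : a * a = 0.

Lemma sqr0_mul1B1D : (1 - a) * (1 + a) = 1.
Proof. by rewrite mulrBl mul1r mulrDr mulr1 a2 addr0 addrK. Qed.

Lemma sqr0_mul1D1B : (1 + a) * (1 - a) = 1.
Proof. by rewrite mulrDl mul1r mulrBr mulr1 a2 subr0 subrK. Qed.

End SquareZero.

Section InNeighbours.
Variable R : pzRingType.

Lemma idemC (e : R) : idem e -> idem (1 - e).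
Proof. by rewrite /idem => ee; rewrite mulrBr mulr1 mulrBl mul1r ee subrr subr0. Qed.

Lemma same_in_nbrs_sym (e e' : R) : same_in_nbrs e e' -> same_in_nbrs e' e.
Proof. by move=> H f /H [? ?]; split. Qed.

Lemma same_in_nbrs_mulr_id (e e' : R) :
  idem e -> same_in_nbrs e e' -> e * e' = e'.
Proof.
move=> ee H; have : (1 - e) * e = 0 by rewrite mulrBl mul1r ee subrr.
move/(H _ (idemC ee)); rewrite mulrBl mul1r => /eqP.
by rewrite subr_eq0 => /eqP.
Qed.

End InNeighbours.

Theorem mainTheorem8 (R : pzRingType) (e1 e2 : R) :
  idem e1 -> idem e2 -> same_in_nbrs e1 e2 ->
  exists phi : {rmorphism R -> R}, bijective phi /\ phi e1 = e2.
Proof.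
move=> i1 i2 H.
have e12 : e1 * e2 = e2 := same_in_nbrs_mulr_id i1 H.
have e21 : e2 * e1 = e1 := same_in_nbrs_mulr_id i2 (same_in_nbrs_sym H).
pose a := e2 - e1.
have a2 : a * a = 0 by rewrite mulrBr !mulrBl i1 i2 e12 e21 !subrr.
have ae1 : a * e1 = 0 by rewrite mulrBl e21 i1 subrr.
have e1a : e1 * a = a by rewrite mulrBr e12 i1.
exists (conjr (sqr0_mul1D1B a2) (sqr0_mul1B1D a2)).
split; first exact: conjr_bij.
rewrite /= /conjr mulrBl mul1r ae1 subr0 mulrDr mulr1 e1a.
by rewrite addrC subrK.
Qed.
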